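(* Let $f\colon R\to S$ be a ring homomorphism. Assume that every semiprime factor ring of $R$ and of $S$ is left or right Goldie, and that the prime radical of every factor ring of $R$ and of $S$ is nilpotent. (1) The following are equivalent: (i) $\lambda$ is a left adjoint to $\rho$; (ii) the correspondence $\mathbf r\colon \operatorname{Spec} S\to\operatorname{Spec} R$ is single-valued (i.e. $\mathbf r P$ is a one-element set for every $P\in\operatorname{Spec} S$), $\mathbf r$ is continuous, and $\mathbf r^{[-1]}V_R(I)=V_S(I^S)$ for all ideals $I$ of $R$. (2) If moreover $S$ is left noetherian, then (i), (ii) and the following are all equivalent: (iii) for each $Q\in\operatorname{Spec} R$ there is a positive integer $t$ such that $f(Q)^tS\subseteq Sf(Q)$; (iv) for each ideal $I$ of $R$ there is a positive integer $t$ such that $f(I)^tS\subseteq Sf(I)$.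
   Context: Rings are associative with identity, not necessarily commutative. For a ring $A$, $\operatorname{Spec} A$ is the set of prime ideals with the Zariski topology, whose closed sets are $V_A(X)=\{P\in\operatorname{Spec} A: P\supseteq X\}$ for $X\subseteq A$. For $U\subseteq \operatorname{Spec} A$, $I(U)$ denotes the intersection of the primes in $U$. $\operatorname{SPEC} A$ denotes the category whose objects are the closed subsets of $\operatorname{Spec} A$ and whose morphisms are inclusions. For a ring homomorphism $f\colon R\to S$: the correspondence $\mathbf r$ assigns to each $P\in\operatorname{Spec} S$ the set $\mathbf r P$ of prime ideals of $R$ minimal over $f^{-1}(P)$. For $V\subseteq\operatorname{Spec} R$, $\mathbf r^{[-1]}V=\{P\in\operatorname{Spec} S:\mathbf rP\subseteq V\}$; $\mathbf r$ is called continuous if $\mathbf r^{[-1]}V$ is closed in $\operatorname{Spec} S$ for every closed $V\subseteq \operatorname{Spec} R$. For an ideal $I$ of $R$, $I^S=\operatorname{ann}_S(S/Sf(I))$ (annihilator of the left $S$-module $S/Sf(I)$). The functor $\lambda\colon\operatorname{SPEC} S\to\operatorname{SPEC} R$ sends $V$ to $V_R(f^{-1}(I(V)))$, and $\rho\colon \operatorname{SPEC} R\to\operatorname{SPEC} S$ sends $V$ to $V_S(I(V)^S)$. ''$\lambda$ is a left adjoint to $\rho$'' means: for all closed $U\subseteq\operatorname{Spec} S$ and closed $V\subseteq\operatorname{Spec} R$, $\lambda U\subseteq V \iff U\subseteq \rho V$. *)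

(* rings are pzRingType (associative, with 1, possibly the
   zero ring); subsets are classical sets `set T` from mathcomp-classical. *)
From HB Require Import structures.
From mathcomp Require Import all_boot all_order all_algebra.
From mathcomp Require Import boolp classical_sets.
Set Implicit Arguments. Unset Strict Implicit. Unset Printing Implicit Defensive.
Import GRing.Theory.
Local Open Scope ring_scope.
Local Open Scope classical_set_scope.

Section RingNotions.
Variable T : pzRingType.

Inductive addspan (X : set T) : T -> Prop :=
| addspan_in x : X x -> addspan X x
| addspan0 : addspan X 0
| addspanB x y : addspan X x -> addspan X y -> addspan X (x - y).

Definition mulset (A B : set T) : set T :=
  addspan [set a * b | a in A & b in B].

(* X^t (X^0 = Z.1, X^1 = additive span of X, X^(t+1) = X^t X) *)
Fixpoint ipow (X : set T) (t : nat) : set T :=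
  match t with
  | 0 => addspan [set 1]
  | t'.+1 => mulset (ipow X t') X
  end.

Definition left_ideal (L : set T) : Prop :=
  [/\ L 0, (forall x y, L x -> L y -> L (x - y)) & (forall r x, L x -> L (r * x))].

Definition ideal (I : set T) : Prop :=
  [/\ I 0, (forall x y, I x -> I y -> I (x - y)),
      (forall r x, I x -> I (r * x)) & (forall r x, I x -> I (x * r))].

Definition prime_ideal (P : set T) : Prop :=
  [/\ ideal P, P != setT &
      forall A B, ideal A -> ideal B -> mulset A B `<=` P -> A `<=` P \/ B `<=` P].

Definition Spec : set (set T) := [set P | prime_ideal P].

Definition Vset (X : set T) : set (set T) := [set P | Spec P /\ X `<=` P].

Definition closed_Spec (V : set (set T)) : Prop := exists X, V = Vset X.

Definition Iof (U : set (set T)) : set T := \bigcap_(P in U) P.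

Definition nilpotent_ideal (A : set T) : Prop :=
  exists n, (0 < n)%N /\ ipow A n `<=` [set 0].

Definition semiprime_ring : Prop :=
  forall A, ideal A -> nilpotent_ideal A -> A = [set 0].

Definition prime_radical : set T := Iof Spec.

Definition lann (X : set T) : set T := [set r | forall x, X x -> r * x = 0].

Definition acc_left_annihilators : Prop :=
  forall X : nat -> set T, (forall n, lann (X n) `<=` lann (X n.+1)) ->
  exists m, forall n, (m <= n)%N -> lann (X n) = lann (X m).

Definition sum_before (L : nat -> set T) (n : nat) : set T :=
  [set y | exists x : 'I_n -> T, (forall i : 'I_n, L i (x i)) /\ y = \sum_(i < n) x i].

(* finite left uniform dimension: no infinite direct sum of nonzero left ideals *)
Definition finite_left_udim : Prop :=
  ~ exists L : nat -> set T,
      (forall n, left_ideal (L n) /\ L n != [set 0]) /\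
      (forall n, L n `&` sum_before L n `<=` [set 0]).

Definition left_goldie : Prop := finite_left_udim /\ acc_left_annihilators.

Definition left_noetherian : Prop :=
  forall L : nat -> set T, (forall n, left_ideal (L n)) ->
  (forall n, L n `<=` L n.+1) -> exists m, forall n, (m <= n)%N -> L n = L m.

End RingNotions.

Definition right_goldie (T : pzRingType) : Prop := left_goldie (T^c)%type.

(* standing hypothesis on a ring A, quantified over all factor rings
   (= rings T with a surjective ring homomorphism A -> T) *)
Definition factor_hyp (A : pzRingType) : Prop :=
  forall (T : pzRingType) (g : {rmorphism A -> T}), (forall y, exists x, g x = y) ->
    (semiprime_ring T -> left_goldie T \/ right_goldie T) /\
    nilpotent_ideal (@prime_radical T).

Section Morphism.
Variables (R S : pzRingType) (f : {rmorphism R -> S}).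

(* I^S = ann_S (S / S f(I)) *)
Definition extS (I : set R) : set S :=
  [set s | forall x : S, mulset setT (f @` I) (s * x)].

Definition lambda (U : set (set S)) : set (set R) := Vset (f @^-1` Iof U).
Definition rho (V : set (set R)) : set (set S) := Vset (extS (Iof V)).

Definition left_adjoint : Prop :=
  forall U V, closed_Spec U -> closed_Spec V ->
    (lambda U `<=` V <-> U `<=` rho V).

Definition rcorr (P : set S) : set (set R) :=
  [set Q | Spec Q /\ f @^-1` P `<=` Q /\
     forall Q', Spec Q' -> f @^-1` P `<=` Q' -> Q' `<=` Q -> Q' = Q].

Definition rinv (V : set (set R)) : set (set S) :=
  [set P | Spec P /\ rcorr P `<=` V].

Definition r_single_valued : Prop :=
  forall P, Spec P -> exists Q, rcorr P = [set Q].

Definition r_continuous : Prop :=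
  forall V, closed_Spec V -> closed_Spec (rinv V).

Definition cond_ii : Prop :=
  [/\ r_single_valued, r_continuous &
      forall I, ideal I -> rinv (Vset I) = Vset (extS I)].

Definition cond_iii : Prop :=
  forall Q, Spec Q -> exists t, (0 < t)%N /\
    mulset (ipow (f @` Q) t) setT `<=` mulset setT (f @` Q).

Definition cond_iv : Prop :=
  forall I, ideal I -> exists t, (0 < t)%N /\
    mulset (ipow (f @` I) t) setT `<=` mulset setT (f @` I).

End Morphism.

(* Under the standing hypotheses every ideal I contains a finite product of
   primes containing I: the radical N of I is nilpotent modulo I, and the
   semiprime Goldie ring T/N has finitely many primes with zero intersection
   (maximal annihilators of nonzero ideals are prime, and an infinite supply
   of them would give an infinite direct sum of ideals).  Replacing ideals by
   such prime products reduces every condition to its instance on primes: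
   whenever Q^S is contained in a prime P of S, Q lies in every prime over
   f^-1(P).  A prime Q over f^-1(P) with Q^S in P then is the least prime
   over f^-1(P), which makes r single-valued. *)
From HB Require Import structures.
From mathcomp Require Import all_boot all_order all_algebra.
From mathcomp Require Import boolp classical_sets.
From mathcomp Require Import generic_quotient.
From Stdlib Require List.
Set Implicit Arguments. Unset Strict Implicit. Unset Printing Implicit Defensive.
Import GRing.Theory.
Local Open Scope ring_scope.
Local Open Scope classical_set_scope.

Lemma In_map (aT rT : Type) (h : aT -> rT) (s : seq aT) y :
  List.In y (map h s) <-> exists x, h x = y /\ List.In x s.
Proof.
elim: s => [|x s IH] /=; first by split => // -[z [_ []]].
split.
  case=> [<-|/IH [z [<- hz]]]; first by exists x; split => //; left.
  by exists z; split => //; right.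
case=> z [hzy [hxz|hz]]; first by left; rewrite hxz.
by right; apply/IH; exists z.
Qed.

Lemma In_flatten_nseq (T : Type) (L : seq T) n A :
  List.In A (flatten (nseq n L)) -> List.In A L.
Proof.
elim: n => [//|n IH] /= h.
by case: (List.in_app_or _ _ _ h) => [//|/IH].
Qed.

Section SubsetProducts.
Variable T : pzRingType.
Implicit Types (A B C X Y I J P : set T).

Definition addgroup_closed Y := Y 0 /\ forall x y, Y x -> Y y -> Y (x - y).

Lemma addspan_closed X : addgroup_closed (addspan X).
Proof. by split; [apply: addspan0| move=> x y; apply: addspanB]. Qed.

Lemma addspan_min X Y : addgroup_closed Y -> X `<=` Y -> addspan X `<=` Y.
Proof. by move=> [Y0 YB] XY x; elim=> [a /XY| |a b _ ha _ hb]; [| |apply: YB]. Qed.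

Lemma addspanS X Y : X `<=` Y -> addspan X `<=` addspan Y.
Proof.
move=> XY; apply: addspan_min; first exact: addspan_closed.
by move=> x /XY; apply: addspan_in.
Qed.

Lemma addgroup_closed0 : addgroup_closed [set 0 : T].
Proof. by split => // x y -> ->; rewrite subr0. Qed.

Lemma mulset_closed A B : addgroup_closed (mulset A B).
Proof. exact: addspan_closed. Qed.

Lemma mulset_gen A B a b : A a -> B b -> mulset A B (a * b).
Proof. by move=> Aa Bb; apply: addspan_in; exists a => //; exists b. Qed.

Lemma mulset_min A B Y : addgroup_closed Y ->
  (forall a b, A a -> B b -> Y (a * b)) -> mulset A B `<=` Y.
Proof. by move=> hY H; apply: addspan_min => // _ [a Aa [b Bb <-]]; apply: H. Qed.

Lemma mulset_zero A B : (forall a b, A a -> B b -> a * b = 0) ->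
  mulset A B `<=` [set 0].
Proof. by move=> H; apply: mulset_min => [|a b Aa Bb]; [apply: addgroup_closed0| apply: H]. Qed.

Lemma mulsetS A B C X : A `<=` C -> B `<=` X -> mulset A B `<=` mulset C X.
Proof.
move=> AC BX; apply: mulset_min; first exact: mulset_closed.
by move=> a b /AC Ca /BX Xb; apply: mulset_gen.
Qed.

Lemma addspan_mulr X b Y : addgroup_closed Y -> (forall a, X a -> Y (a * b)) ->
  forall x, addspan X x -> Y (x * b).
Proof.
move=> hY H x; elim=> [a /H //| |x1 x2 _ h1 _ h2]; first by rewrite mul0r; case: hY.
by rewrite mulrBl; apply: hY.2.
Qed.

Lemma addspan_mull X a Y : addgroup_closed Y -> (forall b, X b -> Y (a * b)) ->
  forall x, addspan X x -> Y (a * x).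
Proof.
move=> hY H x; elim=> [b /H //| |x1 x2 _ h1 _ h2]; first by rewrite mulr0; case: hY.
by rewrite mulrBr; apply: hY.2.
Qed.

Lemma mulsetA_subl A B C : mulset (mulset A B) C `<=` mulset A (mulset B C).
Proof.
apply: mulset_min; first exact: mulset_closed.
move=> x c Ax Cc; apply: (addspan_mulr (X := [set a * b | a in A & b in B])) => //.
  exact: mulset_closed.
by move=> _ [a Aa [b Bb <-]]; rewrite -mulrA; apply: mulset_gen => //; apply: mulset_gen.
Qed.

Lemma mulsetA_subr A B C : mulset A (mulset B C) `<=` mulset (mulset A B) C.
Proof.
apply: mulset_min; first exact: mulset_closed.
move=> a x Aa Bx; apply: (addspan_mull (X := [set b * c | b in B & c in C])) => //.
  exact: mulset_closed.
by move=> _ [b Bb [c Cc <-]]; rewrite mulrA; apply: mulset_gen => //; apply: mulset_gen.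
Qed.

Lemma ideal_closed I : ideal I -> addgroup_closed I.
Proof. by case. Qed.

Lemma ideal0 I : ideal I -> I 0.
Proof. by case. Qed.

Lemma idealB I x y : ideal I -> I x -> I y -> I (x - y).
Proof. by case=> _ H _ _; apply: H. Qed.

Lemma idealN I x : ideal I -> I x -> I (- x).
Proof. by move=> hI Ix; rewrite -sub0r; apply: idealB => //; apply: ideal0. Qed.

Lemma idealD I x y : ideal I -> I x -> I y -> I (x + y).
Proof. by move=> hI Ix Iy; rewrite -[y]opprK; apply: idealB => //; apply: idealN. Qed.

Lemma idealMl I r x : ideal I -> I x -> I (r * x).
Proof. by case=> _ _ H _; apply: H. Qed.

Lemma idealMr I r x : ideal I -> I x -> I (x * r).
Proof. by case=> _ _ _ H; apply: H. Qed.

Lemma ideal_left I : ideal I -> left_ideal I.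
Proof. by case. Qed.

Lemma idealI I J : ideal I -> ideal J -> ideal (I `&` J).
Proof.
move=> hI hJ; split; first by split; apply: ideal0.
- by move=> x y [? ?] [? ?]; split; apply: idealB.
- by move=> r x [? ?]; split; apply: idealMl.
- by move=> r x [? ?]; split; apply: idealMr.
Qed.

Lemma mulset_idealr A I : ideal I -> mulset A I `<=` I.
Proof. by move=> hI; apply: mulset_min => [|a b _]; [exact: ideal_closed| exact: idealMl]. Qed.

Lemma mulset_ideall I A : ideal I -> mulset I A `<=` I.
Proof. by move=> hI; apply: mulset_min => [|a b Ia _]; [exact: ideal_closed| exact: idealMr]. Qed.

Lemma mulset_ideal A B : ideal A -> ideal B -> ideal (mulset A B).
Proof.
move=> hA hB; split; [exact: addspan0| move=> x y; exact: addspanB| |].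
- move=> r x; apply: (addspan_mull (X := [set a * b | a in A & b in B])).
    exact: mulset_closed.
  by move=> _ [a Aa [b Bb <-]]; rewrite mulrA; apply: mulset_gen => //; apply: idealMl.
- move=> r x; apply: (addspan_mulr (X := [set a * b | a in A & b in B])).
    exact: mulset_closed.
  by move=> _ [a Aa [b Bb <-]]; rewrite -mulrA; apply: mulset_gen => //; apply: idealMr.
Qed.

Lemma ipow1 I : ideal I -> ipow I 1 = I.
Proof.
move=> hI; apply/seteqP; split; last first.
  by move=> x Ix; rewrite -[x]mul1r; apply: mulset_gen => //; apply: addspan_in.
apply: mulset_min => [|z x hz Ix]; first exact: ideal_closed.
apply: (addspan_mulr (X := [set 1])) hz; first exact: ideal_closed.
by move=> a ->; rewrite mul1r.
Qed.

Lemma ipow_ideal I n : ideal I -> ideal (ipow I n.+1).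
Proof.
move=> hI; elim: n => [|n IH]; first by rewrite ipow1.
exact: mulset_ideal.
Qed.

Lemma ipowS X Y n : X `<=` Y -> ipow X n `<=` ipow Y n.
Proof. by move=> XY; elim: n => [//|n IH] /=; apply: mulsetS. Qed.

Lemma ipow_sub_leq Y k k' I : ideal I -> (k <= k')%N ->
  ipow Y k `<=` I -> ipow Y k' `<=` I.
Proof.
move=> hI /subnK <-; elim: (k' - k)%N => // d IH h; rewrite addSn.
move=> x hx; apply: (mulset_ideall (A := Y) hI).
by apply: mulsetS hx => //; apply: IH.
Qed.

Lemma ipowD Y a b : ipow Y (a + b) `<=` mulset (ipow Y a) (ipow Y b).
Proof.
elim: b => [|b IH].
  by rewrite addn0 => x h; rewrite -[x]mulr1; apply: mulset_gen => //; apply: addspan_in.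
by rewrite addnS /= => x /(mulsetS IH (@subset_refl _ Y)) /mulsetA_subl.
Qed.

End SubsetProducts.

Section PrimeProducts.
Variable T : pzRingType.
Implicit Types (A I N P : set T) (L : seq (set T)).

Fixpoint prodl L : set T :=
  if L is A :: L' then mulset A (prodl L') else setT.

Definition all_ideal L := forall A, List.In A L -> ideal A.

Definition primes_over I L := forall P, List.In P L -> prime_ideal P /\ I `<=` P.

Lemma all_ideal_cons A L : all_ideal (A :: L) -> ideal A /\ all_ideal L.
Proof. by move=> hL; split => [|B hB]; apply: hL; [left| right]. Qed.

Lemma prodl_ideal L : all_ideal L -> ideal (prodl L).
Proof.
elim: L => [//|A L IH] /all_ideal_cons [hA hL] /=.
by apply: mulset_ideal => //; apply: IH.
Qed.

Lemma prodl_cat L1 L2 : prodl (L1 ++ L2) `<=` mulset (prodl L1) (prodl L2).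
Proof.
elim: L1 => [|A L1 IH] /=; first by move=> x h; rewrite -[x]mul1r; apply: mulset_gen.
by move=> x /(mulsetS (@subset_refl _ A) IH) /mulsetA_subr.
Qed.

Lemma prodl_sub L A : all_ideal L -> List.In A L -> prodl L `<=` A.
Proof.
elim: L => [//|B L IH] /all_ideal_cons [hB hL] /= [<-|hA].
  exact: mulset_ideall.
exact: subset_trans (mulset_idealr (prodl_ideal hL)) (IH hL hA).
Qed.

Lemma prime_ideal_ideal P : prime_ideal P -> ideal P.
Proof. by case. Qed.

Lemma primes_over_ideal I L : primes_over I L -> all_ideal L.
Proof. by move=> hL A /hL [/prime_ideal_ideal]. Qed.

Lemma prime_neq1 P : prime_ideal P -> ~ P 1.
Proof.
case=> hP /eqP nT _ P1; apply: nT; apply/seteqP; split => // x _.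
by rewrite -[x]mulr1; apply: idealMl.
Qed.

Lemma prime_prodl P L : prime_ideal P -> all_ideal L -> prodl L `<=` P ->
  exists2 A, List.In A L & A `<=` P.
Proof.
move=> hP; elim: L => [|A L IH] /=; first by move=> _ /(_ 1 I) /(prime_neq1 hP).
move=> /all_ideal_cons [hA hL] h.
case: hP => _ _ /(_ _ _ hA (prodl_ideal hL) h) [AP|/(IH hL) [B hB BP]].
  by exists A => //; left.
by exists B => //; right.
Qed.

Lemma prime_ipow P I n : prime_ideal P -> ideal I -> ipow I n.+1 `<=` P -> I `<=` P.
Proof.
move=> hP hI; elim: n => [|n IH]; first by rewrite ipow1.
by case: hP => _ _ /(_ _ _ (ipow_ideal n hI) hI) hpr /hpr [/IH|].
Qed.

Lemma ipow_prodl Y K L : all_ideal L -> (forall A, List.In A L -> ipow Y K `<=` A) ->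
  ipow Y (K * size L) `<=` prodl L.
Proof.
elim: L => [//|A L IH] /all_ideal_cons [hA hL] h /=.
rewrite mulnS => x /ipowD; apply: mulsetS.
  by apply: h; left.
by apply: IH => // B hB; apply: h; right.
Qed.

Lemma prodl_flatten L N n : ideal N -> prodl L `<=` N ->
  prodl (flatten (nseq n.+1 L)) `<=` ipow N n.+1.
Proof.
move=> hN hL; elim: n => [|n IH]; first by rewrite ipow1 //= cats0.
have -> : flatten (nseq n.+2 L) = flatten (nseq n.+1 L) ++ L.
  by rewrite -addn1 nseqD flatten_cat /= cats0.
by move=> x /prodl_cat /(mulsetS IH hL).
Qed.

Lemma seq_minimal (L : seq (set T)) (p : set T -> Prop) :
  (exists A, List.In A L /\ p A) ->
  exists A, [/\ List.In A L, p A &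
    forall B, List.In B L -> p B -> B `<=` A -> A `<=` B].
Proof.
elim: L => [|A0 L IH]; first by case=> ? [].
move=> hex; case: (pselect (exists A, List.In A L /\ p A)) => [/IH [A1 [inA1 pA1 minA1]]|nex].
  case: (pselect (p A0 /\ A0 `<=` A1 /\ ~ A1 `<=` A0)) => [[pA0 [A01 nA10]]|hn].
    exists A0; split => //; first by left.
    move=> B [<-//|inB] pB BA0; exfalso; apply: nA10.
    exact: subset_trans (minA1 B inB pB (subset_trans BA0 A01)) BA0.
  exists A1; split => //; first by right.
  move=> B [<-|inB] pB BA1; last exact: minA1.
  by apply: contrapT => nA; apply: hn.
have pA0 : p A0 by case: hex => A [[<-//|inA] pA]; exfalso; apply: nex; exists A.
exists A0; split => //; first by left.
by move=> B [<-//|inB] pB; exfalso; apply: nex; exists B.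
Qed.

End PrimeProducts.

Section SpecFacts.
Variable T : pzRingType.
Implicit Types (X I P : set T) (U : set (set T)).

Definition radical X : set T := Iof (Vset X).

Lemma Iof_ideal U : U `<=` Spec (T:=T) -> ideal (Iof U).
Proof.
move=> hU; split.
- by move=> P /hU /prime_ideal_ideal /ideal0.
- by move=> x y hx hy P UP; apply: idealB (hx P UP) (hy P UP); apply/prime_ideal_ideal/hU.
- by move=> r x hx P UP; apply: idealMl _ _ (hx P UP); apply/prime_ideal_ideal/hU.
- by move=> r x hx P UP; apply: idealMr _ _ (hx P UP); apply/prime_ideal_ideal/hU.
Qed.

Lemma radical_ideal X : ideal (radical X).
Proof. by apply: Iof_ideal => P []. Qed.

Lemma sub_radical X : X `<=` radical X.
Proof. by move=> x Xx P [_ h]; apply: h. Qed.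

Lemma radical_prime P : prime_ideal P -> radical P = P.
Proof.
move=> hP; apply/seteqP; split; last exact: sub_radical.
by move=> x; apply; split.
Qed.

Lemma Vset_radical X : Vset (radical X) = Vset X.
Proof.
apply/seteqP; split => P [hP h]; split => //.
  exact: subset_trans (@sub_radical X) h.
by move=> x; apply.
Qed.

Lemma closed_Iof U : closed_Spec U -> U = Vset (Iof U).
Proof. by case=> X ->; rewrite Vset_radical. Qed.

Lemma closed_sub U : closed_Spec U -> U `<=` Spec (T:=T).
Proof. by case=> X -> P []. Qed.

Lemma Vset_closed X : closed_Spec (Vset X).
Proof. by exists X. Qed.

End SpecFacts.

Section ImagesPreimages.
Variables (A B : pzRingType) (g : {rmorphism A -> B}).
Implicit Types (X : set A) (Y : set B).

Lemma preimage_closed Y : addgroup_closed Y -> addgroup_closed (g @^-1` Y).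
Proof.
case=> Y0 YB; split => [|x y hx hy]; rewrite /preimage /= ?rmorph0 //.
by rewrite rmorphB; apply: YB.
Qed.

Lemma image_closed X : addgroup_closed X -> addgroup_closed (g @` X).
Proof.
case=> X0 XB; split; first by exists 0 => //; rewrite rmorph0.
by move=> _ _ [x Xx <-] [y Xy <-]; exists (x - y); [apply: XB| rewrite rmorphB].
Qed.

Lemma image_addspan X : g @` addspan X `<=` addspan (g @` X).
Proof.
move=> _ [x hx <-]; elim: hx => [a Xa| |a b _ ha _ hb].
- by apply: addspan_in; exists a.
- by rewrite rmorph0; apply: addspan0.
- by rewrite rmorphB; apply: addspanB.
Qed.

Lemma image_mulset X1 X2 : g @` mulset X1 X2 `<=` mulset (g @` X1) (g @` X2).
Proof.
move=> y /image_addspan; apply: addspan_min; first exact: mulset_closed.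
move=> _ [_ [a Xa [b Yb <-]] <-]; rewrite rmorphM.
by apply: mulset_gen; [exists a| exists b].
Qed.

Lemma image_ipow X n : g @` ipow X n `<=` ipow (g @` X) n.
Proof.
elim: n => [|n IH] /=; last by move=> y /image_mulset /(mulsetS IH (@subset_refl _ _)).
move=> y /image_addspan; apply: addspanS.
by move=> _ [_ -> <-]; rewrite rmorph1.
Qed.

Lemma ipow_image X n : ipow (g @` X) n `<=` g @` ipow X n.
Proof.
elim: n => [|n IH] /=.
  apply: addspan_min; first exact/image_closed/addspan_closed.
  by move=> _ ->; exists 1; [apply: addspan_in| rewrite rmorph1].
apply: mulset_min; first exact/image_closed/mulset_closed.
move=> _ _ /IH [a ha <-] [b hb <-]; exists (a * b); last by rewrite rmorphM.
exact: mulset_gen.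
Qed.

Lemma preimage_prodl L : prodl (map (preimage g) L) `<=` g @^-1` prodl L.
Proof.
elim: L => [//|Y L IH] /=; apply: subset_trans (mulsetS (@subset_refl _ _) IH) _.
apply: mulset_min; first exact/preimage_closed/mulset_closed.
by move=> a b ha hb; rewrite /preimage /= rmorphM; apply: mulset_gen.
Qed.

Lemma preimage_ideal Y : ideal Y -> ideal (g @^-1` Y).
Proof.
move=> hY; split; rewrite /preimage /= ?rmorph0; first exact: ideal0.
- by move=> x y hx hy; rewrite rmorphB; apply: idealB.
- by move=> r x hx; rewrite rmorphM; apply: idealMl.
- by move=> r x hx; rewrite rmorphM; apply: idealMr.
Qed.

Hypothesis g_surj : forall y, exists x, g x = y.

Lemma image_ideal X : ideal X -> ideal (g @` X).
Proof.
move=> hX; split.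
- by exists 0; rewrite ?rmorph0 //; apply: ideal0.
- by move=> _ _ [x Xx <-] [y Xy <-]; exists (x - y); [apply: idealB| rewrite rmorphB].
- move=> r _ [x Xx <-]; have [r' <-] := g_surj r.
  by exists (r' * x); [apply: idealMl| rewrite rmorphM].
- move=> r _ [x Xx <-]; have [r' <-] := g_surj r.
  by exists (x * r'); [apply: idealMr| rewrite rmorphM].
Qed.

Lemma preimage_prime P : prime_ideal P -> prime_ideal (g @^-1` P).
Proof.
move=> hP; have hPi := prime_ideal_ideal hP; split.
- exact: preimage_ideal.
- apply/eqP => h; apply: (prime_neq1 hP); rewrite -(rmorph1 g).
  by have : (g @^-1` P) 1 by rewrite h.
- move=> X1 X2 hX1 hX2 hX12.
  have hm : mulset (g @` X1) (g @` X2) `<=` P.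
    apply: mulset_min; first exact: ideal_closed.
    by move=> _ _ [a Xa <-] [b Yb <-]; rewrite -rmorphM; apply/hX12/mulset_gen.
  case: hP => _ _ /(_ _ _ (image_ideal hX1) (image_ideal hX2) hm) [h|h].
  + by left => x Xx; apply: h; exists x.
  + by right => x Xx; apply: h; exists x.
Qed.

End ImagesPreimages.

Section QuotientRing.
Variables (T : pzRingType) (I : set T).
Hypothesis hI : ideal I.

Definition quot_rel : rel T := fun x y => `[< I (x - y) >].

Lemma quot_rel_refl : reflexive quot_rel.
Proof. by move=> x; apply/asboolP; rewrite subrr; apply: ideal0. Qed.

Lemma quot_rel_sym : symmetric quot_rel.
Proof. by move=> x y; apply/asboolP/asboolP => h; rewrite -opprB; apply: idealN. Qed.

Lemma quot_rel_trans : transitive quot_rel.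
Proof.
move=> y x z /asboolP h1 /asboolP h2; apply/asboolP.
by have := idealD hI h1 h2; rewrite addrA subrK.
Qed.

Definition quot_equiv := EquivRel quot_rel quot_rel_refl quot_rel_sym quot_rel_trans.
Definition quot_ring := {eq_quot quot_equiv}%qT.
HB.instance Definition _ := Choice.on quot_ring.
Definition quot_pi (x : T) : quot_ring := (\pi_quot_ring x)%qT.

Lemma quot_piP x y : quot_pi x = quot_pi y <-> I (x - y).
Proof. by split => [/eqmodP /asboolP|h]; last by apply/eqmodP/asboolP. Qed.

Lemma quot_pi_repr (a : quot_ring) : quot_pi (repr a) = a.
Proof. exact: reprK. Qed.

Lemma repr_quot_pi x : I (repr (quot_pi x) - x).
Proof. by apply/quot_piP; rewrite quot_pi_repr. Qed.

Lemma quot_ind (P : quot_ring -> Prop) : (forall x, P (quot_pi x)) -> forall a, P a.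
Proof. by move=> H a; rewrite -[a]quot_pi_repr; apply: H. Qed.

Definition quot_zero := quot_pi 0.
Definition quot_one := quot_pi 1.
Definition quot_add (a b : quot_ring) := quot_pi (repr a + repr b).
Definition quot_opp (a : quot_ring) := quot_pi (- repr a).
Definition quot_mul (a b : quot_ring) := quot_pi (repr a * repr b).

Lemma quot_addE x y : quot_add (quot_pi x) (quot_pi y) = quot_pi (x + y).
Proof.
apply/quot_piP; have := idealD hI (repr_quot_pi x) (repr_quot_pi y).
by rewrite opprD addrACA.
Qed.

Lemma quot_oppE x : quot_opp (quot_pi x) = quot_pi (- x).
Proof.
apply/quot_piP; have := idealN hI (repr_quot_pi x).
by rewrite opprB opprK addrC.
Qed.

Lemma quot_mulE x y : quot_mul (quot_pi x) (quot_pi y) = quot_pi (x * y).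
Proof.
apply/quot_piP; set a := repr (quot_pi x); set b := repr (quot_pi y).
have -> : a * b - x * y = (a - x) * b + x * (b - y).
  by rewrite mulrBl mulrBr addrA subrK.
by apply: (idealD hI); [apply: (idealMr _ hI)| apply: (idealMl _ hI)]; apply: repr_quot_pi.
Qed.

Lemma quot_addA : associative quot_add.
Proof. by elim/quot_ind=> x; elim/quot_ind=> y; elim/quot_ind=> z; rewrite !quot_addE addrA. Qed.
Lemma quot_addC : commutative quot_add.
Proof. by elim/quot_ind=> x; elim/quot_ind=> y; rewrite !quot_addE addrC. Qed.
Lemma quot_add0 : left_id quot_zero quot_add.
Proof. by elim/quot_ind=> x; rewrite quot_addE add0r. Qed.
Lemma quot_addN : left_inverse quot_zero quot_opp quot_add.
Proof. by elim/quot_ind=> x; rewrite quot_oppE quot_addE addNr. Qed.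
Lemma quot_mulA : associative quot_mul.
Proof. by elim/quot_ind=> x; elim/quot_ind=> y; elim/quot_ind=> z; rewrite !quot_mulE mulrA. Qed.
Lemma quot_mul1 : left_id quot_one quot_mul.
Proof. by elim/quot_ind=> x; rewrite quot_mulE mul1r. Qed.
Lemma quot_mulr1 : right_id quot_one quot_mul.
Proof. by elim/quot_ind=> x; rewrite quot_mulE mulr1. Qed.
Lemma quot_mulDl : left_distributive quot_mul quot_add.
Proof.
by elim/quot_ind=> x; elim/quot_ind=> y; elim/quot_ind=> z; rewrite !(quot_addE, quot_mulE) mulrDl.
Qed.
Lemma quot_mulDr : right_distributive quot_mul quot_add.
Proof.
by elim/quot_ind=> x; elim/quot_ind=> y; elim/quot_ind=> z; rewrite !(quot_addE, quot_mulE) mulrDr.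
Qed.

HB.instance Definition _ := GRing.isPzRing.Build quot_ring
  quot_addA quot_addC quot_add0 quot_addN quot_mulA quot_mul1 quot_mulr1 quot_mulDl quot_mulDr.

Lemma quot_pi_is_zmod : GRing.zmod_morphism quot_pi.
Proof.
move=> x y; rewrite -[quot_pi x - quot_pi y]/(quot_add (quot_pi x) (quot_opp (quot_pi y))).
by rewrite quot_oppE quot_addE.
Qed.
HB.instance Definition _ := GRing.isZmodMorphism.Build T quot_ring quot_pi quot_pi_is_zmod.

Lemma quot_pi_is_monoid : GRing.monoid_morphism quot_pi.
Proof. by split => // x y; rewrite -[quot_pi x * quot_pi y]/(quot_mul _ _) quot_mulE. Qed.
HB.instance Definition _ := GRing.isMonoidMorphism.Build T quot_ring quot_pi quot_pi_is_monoid.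

Definition quot_morph : {rmorphism T -> quot_ring} := quot_pi.

Lemma quot_morph_surj y : exists x, quot_morph x = y.
Proof. by exists (repr y); apply: quot_pi_repr. Qed.

Lemma quot_morph_eq0 x : quot_morph x = 0 <-> I x.
Proof. by rewrite -[0]/(quot_pi 0) quot_piP subr0. Qed.

End QuotientRing.
Arguments quot_morph_surj {T I} hI y.

Section GoldiePrimes.
Variable U : pzRingType.
Implicit Types (A B C X : set U).

Definition nonzero_set X := exists a, X a /\ a <> 0.

Definition nonzero_subideal C B := [/\ ideal B, B `<=` C & nonzero_set B].

Lemma lann_ideal B : ideal B -> ideal (lann B).
Proof.
move=> hB; split.
- by move=> x _; rewrite mul0r.
- by move=> a b ha hb x Bx; rewrite mulrBl ha // hb // subr0.
- by move=> r a ha x Bx; rewrite -mulrA ha // mulr0.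
- by move=> r a ha x Bx; rewrite -mulrA; apply/ha/(idealMl _ hB).
Qed.

Lemma lann_maximal_subideal C : acc_left_annihilators U -> nonzero_subideal C C ->
  exists2 B, nonzero_subideal C B &
    forall B', nonzero_subideal C B' -> lann B `<=` lann B' -> lann B' `<=` lann B.
Proof.
move=> acc gC; apply: contrapT => nomax.
have next B : exists B', nonzero_subideal C B ->
    [/\ nonzero_subideal C B', lann B `<=` lann B' & ~ lann B' `<=` lann B].
  case: (pselect (nonzero_subideal C B)) => gB; last by exists B.
  have /existsNP [B' /not_implyP [gB' /not_implyP [h1 h2]]] :
      ~ forall B', nonzero_subideal C B' -> lann B `<=` lann B' -> lann B' `<=` lann B.
    by move=> h; apply: nomax; exists B.
  by exists B'.
have [nxt hnxt] := choice next.
pose X n := iter n nxt C.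
have gX n : nonzero_subideal C (X n) by elim: n => [//|n /hnxt []].
have [m hm] := acc X (fun n => let: And3 _ h _ := hnxt _ (gX n) in h).
have [_ _] := hnxt _ (gX m); apply.
by rewrite -/(X m.+1) (hm m.+1 (leqnSn m)).
Qed.

Lemma lann_maximal_prime C B : nonzero_subideal C B ->
  (forall B', nonzero_subideal C B' -> lann B `<=` lann B' -> lann B' `<=` lann B) ->
  prime_ideal (lann B).
Proof.
move=> [hB BC [b [Bb b0]]] maxB; split; first exact: lann_ideal.
  apply/eqP => hT; have : lann B 1 by rewrite hT.
  by move=> /(_ b Bb); rewrite mul1r.
move=> A1 A2 _ hA2 h12; case: (pselect (A2 `<=` lann B)) => [|A2B]; first by right.
left; move: A2B => /existsNP [a2 /not_implyP [A2a2 /existsNP [b' /not_implyP [Bb' ab0]]]].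
have gB' : nonzero_subideal C (mulset A2 B).
  split; [exact: mulset_ideal| exact: subset_trans (mulset_idealr hB) BC|].
  by exists (a2 * b'); split => //; apply: mulset_gen.
have lB' : lann (mulset A2 B) `<=` lann B.
  by apply: maxB => // r hr y /(mulset_idealr hB); apply: hr.
move=> a1 A1a1; apply: lB' => y hy.
apply: (addspan_mull (X := [set a * b | a in A2 & b in B]) (Y := [set 0])) hy.
  exact: addgroup_closed0.
move=> _ [a Aa [c Bc <-]]; rewrite mulrA.
by apply: (h12 (a1 * a)) => //; apply: mulset_gen.
Qed.

Lemma exists_lann_prime C : acc_left_annihilators U -> nonzero_subideal C C ->
  exists B, nonzero_subideal C B /\ prime_ideal (lann B).
Proof.
move=> acc /(lann_maximal_subideal acc) [B gB maxB].
by exists B; split => //; apply: lann_maximal_prime gB maxB.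
Qed.

Lemma sum_before_ideal (L : nat -> set U) n : (forall i, ideal (L i)) ->
  ideal (sum_before L n).
Proof.
move=> hL; split.
- by exists (fun _ => 0); split; [move=> i; apply: ideal0| rewrite big1].
- move=> _ _ [x [hx ->]] [y [hy ->]]; exists (fun i => x i - y i).
  by split; [move=> i; apply: idealB| rewrite sumrB].
- move=> r _ [x [hx ->]]; exists (fun i => r * x i).
  by split; [move=> i; apply: idealMl| rewrite mulr_sumr].
- move=> r _ [x [hx ->]]; exists (fun i => x i * r).
  by split; [move=> i; apply: idealMr| rewrite mulr_suml].
Qed.

Hypothesis square_zero_trivial :
  forall A, ideal A -> mulset A A `<=` [set 0] -> A `<=` [set 0].

(* [B n] kills the sum of the earlier terms, so the intersection squares to zero. *)
Lemma annihilating_family_independent (B : nat -> set U) n :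
  (forall i, ideal (B i)) -> (forall i, (i < n)%N -> B n `<=` lann (B i)) ->
  B n `&` sum_before B n `<=` [set 0].
Proof.
move=> hB hlann; apply: square_zero_trivial.
  by apply: idealI; [apply: hB| apply: sum_before_ideal].
apply: mulset_zero => a _ [Ba _] [_ [x [hx ->]]].
by rewrite mulr_sumr big1 // => i _; apply: (hlann i (ltn_ord i) a Ba).
Qed.

Lemma goldie_finite_primes : acc_left_annihilators U -> finite_left_udim U ->
  exists L : seq (set U), (forall P, List.In P L -> prime_ideal P) /\
    Iof [set P | List.In P L] `<=` [set 0].
Proof.
move=> acc udim; apply: contrapT => nofin.
(* Otherwise keep choosing a nonzero ideal [B] inside the intersection of the
   primes [lann B'] found so far; these [B] form an infinite direct sum. *)
have grow L : exists B, (forall P, List.In P L -> prime_ideal P) ->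
    nonzero_subideal (Iof [set P | List.In P L]) B /\ prime_ideal (lann B).
  case: (pselect (forall P, List.In P L -> prime_ideal P)) => hL; last by exists set0.
  suff /(exists_lann_prime acc) [B gB] : nonzero_subideal (Iof [set P | List.In P L])
      (Iof [set P | List.In P L]) by exists B.
  split => //; first exact: Iof_ideal.
  apply: contrapT => nz; apply: nofin; exists L; split => // x hx.
  by apply: contrapT => x0; apply: nz; exists x.
have [F hF] := choice grow.
pose fix Ls n := if n is n'.+1 then lann (F (Ls n')) :: Ls n' else [::].
have Ls_prime n P : List.In P (Ls n) -> prime_ideal P.
  elim: n P => [//|n IH] P /= [<-|]; last exact: IH.
  by have [] := hF _ IH.
pose Bs n := F (Ls n).
have gBs n : nonzero_subideal (Iof [set P | List.In P (Ls n)]) (Bs n).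
  by have [] := hF _ (Ls_prime n).
have Ls_lann n i : (i < n)%N -> List.In (lann (Bs i)) (Ls n).
  elim: n => [//|n IH]; rewrite ltnS leq_eqVlt => /orP [/eqP ->|hi]; first by left.
  by right; apply: IH.
apply: udim; exists Bs; split.
  move=> n; have [/ideal_left hB _ [b [Bb b0]]] := gBs n; split => //.
  by apply/eqP => h; apply: b0; move: Bb; rewrite h.
move=> n; apply: annihilating_family_independent => [i|i hi]; first by have [] := gBs i.
by have [_ sub _] := gBs n; move=> x /sub; apply; apply: Ls_lann.
Qed.

End GoldiePrimes.

Section OppositeRing.
Variable T : pzRingType.
Notation Tc := (T^c)%type.

Lemma addspan_c (X : set T) : addspan (T:=Tc) X = addspan (T:=T) X.
Proof.
apply/seteqP; split => x; elim => [a Xa| |a b _ ha _ hb].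
- exact: addspan_in.
- exact: addspan0.
- exact: addspanB.
- exact: addspan_in.
- exact: addspan0.
- exact: (addspanB (T:=Tc)).
Qed.

Lemma mulset_c (A B : set T) : mulset (T:=Tc) A B = mulset (T:=T) B A.
Proof.
rewrite /mulset addspan_c; f_equal; apply/seteqP; split.
  by move=> _ [a Aa [b Bb <-]]; exists b => //; exists a.
by move=> _ [b Bb [a Aa <-]]; exists a => //; exists b.
Qed.

Lemma ideal_c (A : set T) : ideal (T:=Tc) A <-> ideal (T:=T) A.
Proof. by split; case=> h0 hB hL hR; split. Qed.

Lemma prime_c (P : set T) : prime_ideal (T:=Tc) P -> prime_ideal (T:=T) P.
Proof.
case=> /ideal_c hP hT hpr; split => // A B hA hB hAB.
have /(hpr _ _ (proj2 (ideal_c B) hB) (proj2 (ideal_c A) hA)) [] : mulset (T:=Tc) B A `<=` P.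
  by rewrite mulset_c.
all: by [right| left].
Qed.

Lemma semiprime_square_zero : semiprime_ring T ->
  forall A : set T, ideal A -> mulset A A `<=` [set 0] -> A `<=` [set 0].
Proof.
move=> hsp A hA hAA; suff -> : A = [set 0] by [].
by apply: hsp => //; exists 2%N; split => //; rewrite -[ipow A 2]/(mulset (ipow A 1) A) ipow1.
Qed.

Lemma semiprime_square_zero_c : semiprime_ring T ->
  forall A : set Tc, ideal A -> mulset A A `<=` [set 0] -> A `<=` [set 0].
Proof. by move=> hsp A /ideal_c hA; rewrite mulset_c; apply: semiprime_square_zero. Qed.

Lemma semiprime_goldie_finite_primes : semiprime_ring T ->
  left_goldie T \/ right_goldie T ->
  exists L : seq (set T), (forall P, List.In P L -> prime_ideal P) /\
    Iof [set P | List.In P L] `<=` [set 0].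
Proof.
move=> hsp [[hud hacc]|[hud hacc]].
  exact: goldie_finite_primes (semiprime_square_zero hsp) hacc hud.
have [L [hL h0]] := goldie_finite_primes (semiprime_square_zero_c hsp) hacc hud.
by exists L; split => // P /hL /prime_c.
Qed.

End OppositeRing.

Section FinitePrimeProducts.
Variable A : pzRingType.
Hypothesis HA : factor_hyp A.
Implicit Types (I J N Q : set A).

Lemma radical_nilpotent_mod I : ideal I -> exists n, ipow (radical I) n.+1 `<=` I.
Proof.
move=> hI; pose g := quot_morph hI.
have [_ [n [n0 hn]]] := HA (quot_morph_surj hI).
exists n.-1; rewrite prednK // => x hx; apply/(quot_morph_eq0 hI); apply: (hn (g x)).
apply: (ipowS (X := g @` radical I)); last by apply: image_ipow; exists x.
move=> _ [y Ny <-] P' hP'; apply: (Ny (g @^-1` P')).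
split; first exact: (preimage_prime (quot_morph_surj hI) hP').
move=> i Ii; rewrite /preimage /= (proj2 (quot_morph_eq0 hI i) Ii).
exact: ideal0 (prime_ideal_ideal hP').
Qed.

Lemma quot_radical_semiprime I (hN : ideal (radical I)) : semiprime_ring (quot_ring hN).
Proof.
move=> A' hA' [m [m0 hm]]; apply/seteqP; split => [a' Aa'|_ ->]; last exact: ideal0.
pose g := quot_morph hN; have [a ha] := quot_morph_surj hN a'.
have hmN : ipow (g @^-1` A') m `<=` radical I.
  move=> x hx; apply/(quot_morph_eq0 hN); apply: (hm (g x)).
  apply: (ipowS (X := g @` (g @^-1` A'))); first by move=> _ [y hy <-].
  by apply: image_ipow; exists x.
have : radical I a.
  move=> P [hP IP]; apply: (prime_ipow (n := m.-1) hP (preimage_ideal g hA')).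
    by rewrite prednK // => x /hmN; apply.
  by rewrite /preimage /= -/g ha.
by move/(quot_morph_eq0 hN); rewrite -/g ha.
Qed.

Lemma radical_prime_product I :
  exists L, primes_over (radical I) L /\ prodl L `<=` radical I.
Proof.
have hN := radical_ideal I; pose g := quot_morph hN.
have [hgoldie _] := HA (quot_morph_surj hN).
have hsp := @quot_radical_semiprime I hN.
have [L2 [hL2 L2zero]] := semiprime_goldie_finite_primes hsp (hgoldie hsp).
have hL : primes_over (radical I) (map (preimage g) L2).
  move=> P /In_map [P2 [<- hP2]]; split.
    exact: (preimage_prime (quot_morph_surj hN) (hL2 _ hP2)).
  move=> x Nx; rewrite /preimage /= (proj2 (quot_morph_eq0 hN x) Nx).
  exact: ideal0 (prime_ideal_ideal (hL2 _ hP2)).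
exists (map (preimage g) L2); split => // x hx; apply/(quot_morph_eq0 hN)/L2zero => P2 hP2.
have inP : List.In (preimage g P2) (map (preimage g) L2) by apply/In_map; exists P2.
exact: (prodl_sub (primes_over_ideal hL) inP hx).
Qed.

Lemma prime_product_sub I : ideal I -> exists L, primes_over I L /\ prodl L `<=` I.
Proof.
move=> hI; have [n hn] := radical_nilpotent_mod hI.
have [L [hL hLN]] := radical_prime_product I.
exists (flatten (nseq n.+1 L)); split.
  move=> P inP; have [hP NP] := hL P (In_flatten_nseq inP); split => //.
  exact: subset_trans (@sub_radical _ I) NP.
exact: subset_trans (prodl_flatten (radical_ideal I) hLN) hn.
Qed.

Definition minimal_prime_over J M := [/\ prime_ideal M, J `<=` M &
  forall Q, prime_ideal Q -> J `<=` Q -> Q `<=` M -> Q = M].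

Lemma minimal_prime_below J Q : ideal J -> prime_ideal Q -> J `<=` Q ->
  exists M, minimal_prime_over J M /\ M `<=` Q.
Proof.
move=> hJ hQ JQ; have [L [hL hLJ]] := prime_product_sub hJ.
have hLi := primes_over_ideal hL.
have [B inB BQ] := prime_prodl hQ hLi (subset_trans hLJ JQ).
have [M [inM MQ minM]] := seq_minimal (p := fun B => B `<=` Q) (ex_intro _ B (conj inB BQ)).
have [hM JM] := hL M inM.
exists M; split => //; split => // Q' hQ' JQ' Q'M.
have [B' inB' B'Q'] := prime_prodl hQ' hLi (subset_trans hLJ JQ').
have MB' := minM B' inB' (subset_trans B'Q' (subset_trans Q'M MQ)) (subset_trans B'Q' Q'M).
by apply/seteqP; split => //; apply: subset_trans MB' B'Q'.
Qed.

End FinitePrimeProducts.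

Section Correspondence.
Variables (R S : pzRingType) (f : {rmorphism R -> S}).
Hypotheses (HR : factor_hyp R) (HS : factor_hyp S).
Implicit Types (I J Q : set R) (P : set S).

Local Notation extS := (extS f).

Lemma extS_ideal I : ideal (extS I).
Proof.
have hY := @mulset_closed S setT (f @` I).
split.
- by move=> x; rewrite mul0r; case: hY.
- by move=> a b ha hb x; rewrite mulrBl; apply: hY.2.
- move=> r a ha x; rewrite -mulrA.
  apply: (addspan_mull (X := [set a * b | a in setT & b in f @` I])) (ha x) => //.
  by move=> _ [s _ [y hy <-]]; rewrite mulrA; apply: mulset_gen.
- by move=> r a ha x; rewrite -mulrA; apply: ha.
Qed.

Lemma extSS I J : I `<=` J -> extS I `<=` extS J.
Proof.
move=> IJ s hs x; apply: mulsetS (hs x) => //.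
by move=> _ [y hy <-]; exists y => //; apply: IJ.
Qed.

Lemma mulset_extS I J : mulset (extS I) (extS J) `<=` extS (mulset I J).
Proof.
apply: mulset_min; first exact/ideal_closed/extS_ideal.
move=> x y hx hy s; rewrite -mulrA.
have hT := @mulset_closed S setT (f @` mulset I J).
apply: (addspan_mull (X := [set a * b | a in setT & b in f @` J])) (hy s) => //.
move=> _ [s' _ [_ [b Jb <-]] <-]; rewrite mulrA.
apply: (addspan_mulr (X := [set a * b | a in setT & b in f @` I])) (hx s') => //.
move=> _ [s'' _ [_ [a Ia <-]] <-]; rewrite -mulrA -rmorphM.
by apply: mulset_gen => //; exists (a * b) => //; apply: mulset_gen.
Qed.

Lemma prodl_extS L : prodl (map extS L) `<=` extS (prodl L).
Proof.
elim: L => [|I L IH] /=; last by move=> x /(mulsetS (@subset_refl _ _) IH) /mulset_extS.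
move=> s _ x; rewrite -[s * x]mulr1 -(rmorph1 f).
by apply: mulset_gen => //; exists 1.
Qed.

Lemma extS_preimage P : ideal P -> extS (f @^-1` P) `<=` P.
Proof.
move=> hP s hs; rewrite -[s]mulr1; apply: (mulset_idealr hP).
by apply: (mulsetS (A := setT) (C := setT)) (hs 1) => // _ [y hy <-].
Qed.

Lemma prime_extS_prodl P L I : prime_ideal P -> prodl L `<=` I -> extS I `<=` P ->
  exists2 Q, List.In Q L & extS Q `<=` P.
Proof.
move=> hP LI IP.
have hi : all_ideal (map extS L) by move=> E /In_map [Q [<- _]]; apply: extS_ideal.
have LP : prodl (map extS L) `<=` P by move=> x /prodl_extS /(extSS LI) /IP.
have [E /In_map [Q [<- inQ]] hE] := prime_prodl hP hi LP.
by exists Q.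
Qed.

(* The adjunction on the closed sets V(P), V(Q) with P, Q prime: there
   rho V(Q) = V(Q^S) and lambda V(P) = V(f^-1(P)). *)
Definition prime_adjunction := forall P Q, prime_ideal P -> prime_ideal Q ->
  extS Q `<=` P -> Vset (f @^-1` P) `<=` Vset Q.

Lemma left_adjoint_prime_adjunction : left_adjoint f -> prime_adjunction.
Proof.
move=> hadj P Q hP hQ QP.
have := (hadj (Vset P) (Vset Q) (Vset_closed P) (Vset_closed Q)).2.
rewrite /lambda /rho -/(radical P) -/(radical Q) !radical_prime //; apply.
by move=> P' [hP' PP']; split => //; apply: subset_trans QP PP'.
Qed.

Lemma cond_iii_prime_adjunction : cond_iii f -> prime_adjunction.
Proof.
move=> h3 P Q hP hQ QP Q' [hQ' PQ']; split => //.
have [[|t] [//= _ ht]] := h3 Q hQ.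
apply: (prime_ipow (n := t) hQ' (prime_ideal_ideal hQ)) => y hy.
apply/PQ'/QP => s; apply: ht; apply: mulset_gen => //.
by apply: (image_ipow (n := t.+1)); exists y.
Qed.

Lemma rcorr_least P Q : prime_ideal Q -> f @^-1` P `<=` Q ->
  Vset (f @^-1` P) `<=` Vset Q -> rcorr f P = [set Q].
Proof.
move=> hQ JQ least; apply/seteqP; split => [M [hM [JM minM]]|_ ->].
  by apply: esym; apply: minM => //; have [] := least M (conj hM JM).
split => //; split => // Q' hQ' JQ' Q'Q; apply/seteqP; split => //.
by have [] := least Q' (conj hQ' JQ').
Qed.

Section PrimeAdjunction.
Hypothesis hPA : prime_adjunction.

Lemma least_prime_over_preimage P : prime_ideal P -> exists Q,
  [/\ prime_ideal Q, f @^-1` P `<=` Q, extS Q `<=` P & Vset (f @^-1` P) `<=` Vset Q].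
Proof.
move=> hP; have [L [hL LJ]] := prime_product_sub HR (preimage_ideal f (prime_ideal_ideal hP)).
have [Q inQ QP] := prime_extS_prodl hP LJ (extS_preimage (prime_ideal_ideal hP)).
have [hQ JQ] := hL Q inQ.
by exists Q; split => //; apply: hPA.
Qed.

Lemma rinv_Vset I : ideal I -> rinv f (Vset I) = Vset (extS I).
Proof.
move=> hI; apply/seteqP; split => [P [hP hr]|P [hP IP]].
  have [Q [hQ JQ QP least]] := least_prime_over_preimage hP.
  have /hr [_ IQ] : rcorr f P Q by rewrite (rcorr_least hQ JQ least).
  by split => //; apply: subset_trans (extSS IQ) QP.
split => // M [hM [JM _]]; split => //.
have [L [hL LI]] := prime_product_sub HR hI.
have [Q inQ QP] := prime_extS_prodl hP LI IP.
have [hQ IQ] := hL Q inQ.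
have [_ QM] := hPA hP hQ QP (conj hM JM).
exact: subset_trans IQ QM.
Qed.

Lemma prime_adjunction_cond_ii : cond_ii f.
Proof.
split => [P hP|V cV|]; last exact: rinv_Vset.
  have [Q [hQ JQ _ least]] := least_prime_over_preimage hP.
  by exists Q; apply: rcorr_least.
rewrite (closed_Iof cV) rinv_Vset; first exact: Vset_closed.
by apply: Iof_ideal; apply: closed_sub.
Qed.

Lemma ipow_image_sub_prime I P : ideal I -> prime_ideal P -> extS I `<=` P ->
  exists k, ipow (f @` I) k `<=` P.
Proof.
move=> hI hP IP.
have [L [hL LI]] := prime_product_sub HR hI.
have [Q inQ QP] := prime_extS_prodl hP LI IP.
have [hQ IQ] := hL Q inQ.
have [L2 [hL2 L2J]] := prime_product_sub HR (preimage_ideal f (prime_ideal_ideal hP)).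
have hL2i := primes_over_ideal hL2.
have IL2 : ipow I (1 * size L2) `<=` prodl L2.
  apply: ipow_prodl => // M inM; rewrite ipow1 //; apply: subset_trans IQ _.
  by have [hM JM] := hL2 M inM; have [_] := hPA hP hQ QP (conj hM JM).
exists (1 * size L2)%N => _ /ipow_image [x /IL2 /L2J hx <-]; exact: hx.
Qed.

Lemma prime_adjunction_cond_iv : cond_iv f.
Proof.
move=> I hI; have [LS [hLS LSext]] := prime_product_sub HS (extS_ideal I).
have hLSi := primes_over_ideal hLS.
have [K hK] : exists K, forall P, List.In P LS -> ipow (f @` I) K `<=` P.
  elim: LS hLS {LSext hLSi} => [|P LS IH] hLS; first by exists 0%N.
  have [hP IP] := hLS P (or_introl erefl).
  have [k hk] := ipow_image_sub_prime hI hP IP.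
  have [K' hK'] := IH (fun P' inP' => hLS P' (or_intror inP')).
  exists (maxn k K') => P' [<-|inP'].
    exact: ipow_sub_leq (prime_ideal_ideal hP) (leq_maxl _ _) hk.
  have [hP' _] := hLS P' (or_intror inP').
  exact: ipow_sub_leq (prime_ideal_ideal hP') (leq_maxr _ _) (hK' P' inP').
exists (K * size LS).+1; split => //.
have hext : ipow (f @` I) (K * size LS).+1 `<=` extS I.
  apply: ipow_sub_leq (extS_ideal I) (leqnSn _) _.
  exact: subset_trans (ipow_prodl hLSi hK) LSext.
by apply: mulset_min => [|x s /hext hx _]; [exact: mulset_closed| apply: hx].
Qed.

End PrimeAdjunction.

Lemma cond_ii_left_adjoint : cond_ii f -> left_adjoint f.
Proof.
case=> _ _ rinvE U V cU cV.
have hIV : ideal (Iof V) by apply: Iof_ideal; apply: closed_sub.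
have hIU : ideal (Iof U) by apply: Iof_ideal; apply: closed_sub.
rewrite /rho -(rinvE _ hIV) -(closed_Iof cV); split => [lUV P UP|UrV Q [hQ IUQ]].
  split; first exact: (closed_sub cU UP).
  move=> M [hM [JM _]]; apply: lUV; split => // x Ix; exact: JM (Ix P UP).
have [LS [hLS LSU]] := prime_product_sub HS hIU.
have hpre : all_ideal (map (preimage f) LS).
  by move=> E /In_map [P [<- /hLS [/prime_ideal_ideal /(preimage_ideal f)]]].
have preQ : prodl (map (preimage f) LS) `<=` Q.
  by move=> x /(preimage_prodl (g := f)) /LSU /IUQ.
have [E /In_map [P [<- inP]] PQ] := prime_prodl hQ hpre preQ.
have [hP UP] := hLS P inP.
have {}UP : U P by rewrite (closed_Iof cU).
have [M [[hM JM minM] MQ]] :=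
  minimal_prime_below HR (preimage_ideal f (prime_ideal_ideal hP)) hQ PQ.
have [_ /(_ M) VM] := UrV P UP.
have : V M by apply: VM; split; [exact: hM| split; [exact: JM| exact: minM]].
rewrite (closed_Iof cV) => -[_ IVM].
by split; [exact: hQ| apply: subset_trans IVM MQ].
Qed.

Lemma cond_iv_iii : cond_iv f -> cond_iii f.
Proof. by move=> h Q /prime_ideal_ideal; apply: h. Qed.

End Correspondence.

Theorem theorem3p15 (R S : pzRingType) (f : {rmorphism R -> S})
  (HR : factor_hyp R) (HS : factor_hyp S) :
  (left_adjoint f <-> cond_ii f) /\
  (left_noetherian S ->
     (left_adjoint f <-> cond_iii f) /\ (left_adjoint f <-> cond_iv f)).
Proof.
have adj_ii : left_adjoint f -> cond_ii f.
  by move/left_adjoint_prime_adjunction; apply: prime_adjunction_cond_ii.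
have ii_adj := cond_ii_left_adjoint HR HS (f := f).
have adj_iv : left_adjoint f -> cond_iv f.
  by move/left_adjoint_prime_adjunction; apply: prime_adjunction_cond_iv.
have iii_adj : cond_iii f -> left_adjoint f.
  by move/cond_iii_prime_adjunction/(prime_adjunction_cond_ii HR); apply: ii_adj.
split; first by split => [/adj_ii|/ii_adj].
move=> _; split; first by split => [/adj_iv /cond_iv_iii|/iii_adj].
by split => [/adj_iv|/cond_iv_iii /iii_adj].
Qed.
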